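(* In the augmented graph setting of the context, suppose $\sigma,\kappa$ satisfy $\sigma\ge\sigma_i$ and $\kappa\ge\kappa_i$ for all $i$, and that for every virtual edge between center node $i$ and virtual node $(i,j)$ the weight satisfies $\mu_{ij}^2=\frac{\lambda_{\min}^+(L)}{\sigma\kappa_i}L_{i,j}$. Then $$\lambda_{\min}^+(\tilde L)\ge\frac{\lambda_{\min}^+(L)}{2\sigma\kappa},\qquad \tilde L=\Sigma^{-1/2}AA^T\Sigma^{-1/2}.$$
   Context: $G$ is a connected undirected graph on $n$ nodes with edge set $E^{\rm comm}$ of size $E$. For each $i$, $\sigma_i>0$ and $L_{i,j}>0$ ($j=1,\dots,m$), and $\kappa_i=1+\sigma_i^{-1}\sum_{j=1}^mL_{i,j}$. The augmented graph has $n(1+m)$ nodes (center nodes $i$ and virtual nodes $(i,j)$) and edges: those of $G$ plus the virtual edges $i$–$(i,j)$, each with a fixed orientation. With weights $\mu_{k\ell}>0$ (arbitrary on edges of $G$), $A\in\mathbb{R}^{n(1+m)\times(E+nm)}$ is defined by $Ae_{k\ell}=\mu_{k\ell}(e^{(k)}-e^{(\ell)})$, and $L=A_{\rm comm}A_{\rm comm}^T\in\mathbb{R}^{n\times n}$ where $A_{\rm comm}e_{k\ell}=\mu_{k\ell}(e^{(k)}-e^{(\ell)})$ for $(k,\ell)\in E^{\rm comm}$ (the weighted Laplacian of $G$). $\Sigma$ is the diagonal matrix with $\sigma_i$ at center node $i$ and $L_{i,j}$ at virtual node $(i,j)$. $\lambda_{\min}^+$ denotes the smallest nonzero eigenvalue.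 *)

From HB Require Import structures.
From mathcomp Require Import all_boot all_order all_algebra.
From mathcomp Require Import polyrcf.
Set Implicit Arguments. Unset Strict Implicit. Unset Printing Implicit Defensive.
Import Order.TTheory GRing.Theory Num.Theory.
Local Open Scope ring_scope.

Section Defs.
Variable R : rcfType.

(* The (real) eigenvalues of a square matrix M are the real roots of its
   characteristic polynomial (mxpoly: eigenvalue_root_char);
   rootsR lists them (sorted, without repetition). *)
Definition nonzero_eigs k (M : 'M[R]_k) : seq R :=
  [seq x <- rootsR (char_poly M) | x != 0].

(* lambda_min^+ : smallest nonzero eigenvalue (0 if there is none). *)
Definition lmin_pos k (M : 'M[R]_k) : R :=
  if nonzero_eigs M is x :: s then foldr Num.min x s else 0.

Definition adj n E (src dst : 'I_E -> 'I_n) : rel 'I_n :=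
  fun k l => [exists e, ((src e == k) && (dst e == l)) || ((src e == l) && (dst e == k))].

Definition simple_graph n E (src dst : 'I_E -> 'I_n) : Prop :=
  (forall e, src e != dst e) /\
  (forall e f, e != f ->
     ~ ((src e == src f) && (dst e == dst f) || (src e == dst f) && (dst e == src f))).

Definition connected_graph n E (src dst : 'I_E -> 'I_n) : Prop :=
  forall k l, connect (adj src dst) k l.

Definition Acomm n E (src dst : 'I_E -> 'I_n) (mu : 'I_E -> R) : 'M[R]_(n, E) :=
  \sum_(e < E) mu e *: (delta_mx (src e) e - delta_mx (dst e) e).

Definition Lap n E src dst mu : 'M[R]_n :=
  let A := @Acomm n E src dst mu in A *m A^T.

(* Augmented graph: nodes 'I_(n + n*m); center node i is lshift _ i,
   virtual node (i,j) is rshift n (mxvec_index i j).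
   Edges 'I_(E + n*m); edge e of G is lshift _ e, virtual edge i--(i,j)
   is rshift E (mxvec_index i j). *)
Definition ctr n m (i : 'I_n) : 'I_(n + n * m) := lshift (n * m) i.
Definition vrt n m (i : 'I_n) (j : 'I_m) : 'I_(n + n * m) := rshift n (mxvec_index i j).
Definition cedge E n m (e : 'I_E) : 'I_(E + n * m) := lshift (n * m) e.
Definition vedge E n m (i : 'I_n) (j : 'I_m) : 'I_(E + n * m) := rshift E (mxvec_index i j).

(* orient i j = true : virtual edge oriented i -> (i,j); false : (i,j) -> i.
   Column for edge (k,l): mu_{kl} (e^(k) - e^(l)). *)
Definition Aaug n m E (src dst : 'I_E -> 'I_n) (mu : 'I_E -> R)
    (muv : 'I_n -> 'I_m -> R) (orient : 'I_n -> 'I_m -> bool)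
    : 'M[R]_(n + n * m, E + n * m) :=
  \sum_(e < E) mu e *:
     (delta_mx (ctr m (src e)) (cedge n m e) - delta_mx (ctr m (dst e)) (cedge n m e))
  + \sum_(i < n) \sum_(j < m) (muv i j * (if orient i j then 1 else -1 : R)) *:
     (delta_mx (ctr m i) (vedge E i j) - delta_mx (vrt i j) (vedge E i j)).

Definition sigdiag n m (sig : 'I_n -> R) (Lij : 'I_n -> 'I_m -> R) : 'rV[R]_(n + n * m) :=
  row_mx (\row_i sig i) (mxvec (\matrix_(i, j) Lij i j)).

Definition Sig_isqrt n m sig Lij : 'M[R]_(n + n * m) :=
  diag_mx (map_mx (fun x => (Num.sqrt x)^-1) (@sigdiag n m sig Lij)).

Definition kappa n m (sig : 'I_n -> R) (Lij : 'I_n -> 'I_m -> R) (i : 'I_n) : R :=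
  1 + (sig i)^-1 * \sum_(j < m) Lij i j.

Definition Ltilde n m E src dst mu muv orient sig Lij : 'M[R]_(n + n * m) :=
  let S := @Sig_isqrt n m sig Lij in
  let A := @Aaug n m E src dst mu muv orient in
  S *m (A *m A^T) *m S.

End Defs.

(* An eigenvector [v] of [Ltilde] for a nonzero eigenvalue [lam] is orthogonal
   to the kernel vector [Sigma^(1/2) 1], so [w := Sigma^(-1/2) v] satisfies
   [sum_k Sigma_k w_k = 0], whence [|v|^2 = sum_k Sigma_k w_k^2 <=
   sum_k Sigma_k (w_k - t)^2] for every [t]; take for [t] the mean of [w] over
   the center nodes.  On the centers, the Poincare inequality of [G] bounds
   [lambda_min^+(L) sum_i (w_i - t)^2] by the energy of [w] on [G].  A virtual
   node is charged to its center through
   [(w_ij - t)^2 <= 2 (w_i - t)^2 + 2 (w_i - w_ij)^2], and the weight of the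
   edge [i -- (i,j)] is exactly what pays for the second term.  Summing,
   [lam |v|^2 = |w A|^2 >= lambda_min^+(L) / (2 sigma kappa) |v|^2].
   If [Ltilde] has no nonzero eigenvalue it vanishes, and then so does [L]:
   extending a vector on the centers constantly over each star preserves its
   energy. *)

From HB Require Import structures.
From mathcomp Require Import all_boot all_order all_algebra.
From mathcomp Require Import polyrcf complex sesquilinear spectral.
From mathcomp Require Import ring lra.
Import Order.TTheory GRing.Theory Num.Theory.
Set Implicit Arguments. Unset Strict Implicit. Unset Printing Implicit Defensive.
Local Open Scope ring_scope.

Section QuadraticForms.
Variable R : rcfType.

Definition qform p (N : 'M[R]_p) (x : 'rV[R]_p) : R := (x *m N *m x^T) 0 0.

Lemma qform_eigvec p (N : 'M[R]_p) a x : x *m N = a *: x ->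
  qform N x = a * \sum_k x 0 k ^+ 2.
Proof.
move=> xN; rewrite /qform xN -scalemxAl mxE; congr (_ * _).
by rewrite mxE; apply: eq_bigr => k _; rewrite mxE expr2.
Qed.

Lemma qformD p (N1 N2 : 'M[R]_p) x : qform (N1 + N2) x = qform N1 x + qform N2 x.
Proof. by rewrite /qform mulmxDr mulmxDl mxE. Qed.

Lemma qformN p (N : 'M[R]_p) x : qform (- N) x = - qform N x.
Proof. by rewrite /qform mulmxN mulNmx mxE. Qed.

Lemma qformZ p (N : 'M[R]_p) c x : qform (c *: N) x = c * qform N x.
Proof. by rewrite /qform -scalemxAr -scalemxAl mxE. Qed.

Lemma qform_scalar p (c : R) (x : 'rV_p) : qform c%:M x = c * \sum_k x 0 k ^+ 2.
Proof. by apply: qform_eigvec; rewrite mul_mx_scalar. Qed.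

Lemma qform_const1 p (x : 'rV[R]_p) : qform (const_mx 1) x = (\sum_k x 0 k) ^+ 2.
Proof.
rewrite /qform mxE expr2 mulr_suml; apply: eq_bigr => j _.
rewrite [x^T _ _]mxE mulrC mxE; congr (_ * _).
by apply: eq_bigr => k _; rewrite mxE mulr1.
Qed.

Lemma sum_sqr_row_gt0 p (x : 'rV[R]_p) : x != 0 -> 0 < \sum_k x 0 k ^+ 2.
Proof.
move=> x0; have [k xk] : exists k, x 0 k != 0.
  apply/existsP; apply: contraR x0 => /existsPn xk0.
  by apply/eqP/rowP => k; rewrite mxE; apply/eqP/negbNE.
rewrite (bigD1 k) //= ltr_pwDl ?exprn_even_gt0 ?xk //.
by rewrite sumr_ge0 // => i _; rewrite sqr_ge0.
Qed.

Lemma eigvalue_root p (N : 'M[R]_p) a : root (char_poly N) a ->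
  exists2 x : 'rV_p, x *m N = a *: x & x != 0.
Proof. by rewrite -eigenvalue_root_char => /eigenvalueP. Qed.

Section Spectral.
Local Open Scope sesquilinear_scope.
Local Notation toC := (real_complex R).

(* Diagonalise the complexification of [N] by a unitary matrix. *)
Lemma symmx_qform_spectral p (N : 'M[R]_p) (x : 'rV[R]_p) : N^T = N ->
  exists d z : 'I_p -> R, [/\ forall i, root (char_poly N) (d i),
    forall i, 0 <= z i & qform N x = \sum_i d i * z i].
Proof.
move=> NT; pose Nc := map_mx toC N.
have conj_toC (r : R) : Num.conj (toC r) = toC r := conjc_real r.
have Nc_herm : Nc \is hermsymmx.
  apply/is_hermitianmxP; rewrite expr0 scale1r.
  by apply/matrixP => i j; rewrite !mxE conj_toC -[in RHS]NT mxE.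
have /orthomx_spectralP NcE := hermitian_normalmx Nc_herm.
set P := spectralmx Nc in NcE; set d := spectral_diag Nc in NcE.
have P_unitary : P \is unitarymx by apply: spectral_unitarymx.
have PPt : P *m P^t* = 1%:M by apply/unitarymxP.
have {}NcE : Nc = P^t* *m diag_mx d *m P by rewrite NcE invmx_unitary.
have d_real i : d 0 i \is Num.real.
  exact/mxOverP/hermitian_spectral_diag_real.
pose dR i := complex.Re (d 0 i).
have dRE i : toC (dR i) = d 0 i := RRe_real (d_real i).
pose u := map_mx toC x *m P^t*.
pose z i := complex.Re (u 0 i * (u 0 i)^*).
have zE i : toC (z i) = u 0 i * (u 0 i)^* by rewrite RRe_real // ger0_real // mulcJ_ge0.
exists dR, z; split.
- move=> i; rewrite -(fmorph_root toC) map_char_poly -/Nc.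
  rewrite [X in root _ X](_ : _ = d 0 i); last exact: dRE.
  rewrite -eigenvalue_root_char.
  apply/eigenvalueP; exists (row i P).
    rewrite -row_mul NcE !mulmxA PPt mul1mx mul_diag_mx.
    by apply/rowP => j; rewrite !mxE.
  apply: contra_neq (@oner_neq0 R[i]) => /(congr1 (fun M => (M *m P^t*) 0 i)).
  by rewrite -row_mul PPt mul0mx !mxE eqxx.
- by move=> i; rewrite -ler0c zE mulcJ_ge0.
have xct : (map_mx toC x)^t* = map_mx toC x^T.
  by apply/matrixP => a b; rewrite !mxE conj_toC.
have ut : u^t* = P *m (map_mx toC x)^t* by rewrite trmx_mul map_mxM trmxCK.
apply: complexI; rewrite rmorph_sum /=.
have -> : toC (qform N x) = (map_mx toC x *m Nc *m (map_mx toC x)^t*) 0 0.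
  by rewrite xct -!map_mxM [in RHS]mxE.
rewrite NcE !mulmxA -/u -mulmxA -ut mul_mx_diag mxE; apply: eq_bigr => i _.
by rewrite rmorphM /= dRE zE !mxE mulrA [_ * d 0 i]mulrC.
Qed.

End Spectral.

Lemma symmx_qform_ge0 p (N : 'M[R]_p) x : N^T = N ->
  (forall a, root (char_poly N) a -> 0 <= a) -> 0 <= qform N x.
Proof.
move=> NT eig_ge0; have [d [z [d_root z_ge0 ->]]] := symmx_qform_spectral x NT.
by rewrite sumr_ge0 // => i _; exact: mulr_ge0 (eig_ge0 _ (d_root i)) (z_ge0 i).
Qed.

Lemma mem_nonzero_eigs p (N : 'M[R]_p) a :
  (a \in nonzero_eigs N) = (a != 0) && root (char_poly N) a.
Proof.
rewrite /nonzero_eigs mem_filter; congr (_ && _).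
have N_neq0 : char_poly N != 0 by rewrite monic_neq0 ?char_poly_monic.
apply/idP/idP; first exact: (roots_on_root (roots_on_rootsR N_neq0)).
by move=> a_root; apply: (root_roots_on (roots_on_rootsR N_neq0)).
Qed.

Lemma symmx_qform_eq0 p (N : 'M[R]_p) x : N^T = N ->
  nonzero_eigs N = [::] -> qform N x = 0.
Proof.
move=> NT Nnil; have [d [z [d_root _ ->]]] := symmx_qform_spectral x NT.
rewrite big1 // => i _; have [-> | di_neq0] := eqVneq (d i) 0; first by rewrite mul0r.
have : d i \in nonzero_eigs N by rewrite mem_nonzero_eigs di_neq0 d_root.
by rewrite Nnil.
Qed.

Lemma nonzero_eigs_qform_neq0 p (N : 'M[R]_p) a :
  a \in nonzero_eigs N -> exists x, qform N x != 0.
Proof.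
rewrite mem_nonzero_eigs => /andP[a_neq0 /eigvalue_root[x xN x_neq0]].
by exists x; rewrite (qform_eigvec xN) mulf_neq0 // gt_eqF ?sum_sqr_row_gt0.
Qed.

Lemma psd_eig_ge0 p (N : 'M[R]_p) a : (forall x, 0 <= qform N x) ->
  root (char_poly N) a -> 0 <= a.
Proof.
move=> N_psd /eigvalue_root[x xN x_neq0].
by have := N_psd x; rewrite (qform_eigvec xN) pmulr_lge0 ?sum_sqr_row_gt0.
Qed.

Lemma qform_mul_tr p q (B : 'M[R]_(p, q)) x :
  qform (B *m B^T) x = \sum_k (x *m B) 0 k ^+ 2.
Proof.
rewrite /qform mulmxA -mulmxA -trmx_mul.
by rewrite mxE; apply: eq_bigr => k _; rewrite [_^T _ _]mxE expr2.
Qed.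

End QuadraticForms.

Section LminPos.
Variable R : rcfType.

Lemma le_foldr_min (c x : R) s :
  (c <= foldr Num.min x s) = all [pred y | c <= y] (x :: s).
Proof. by elim: s => [|a s IH] /=; rewrite ?andbT // le_min IH andbCA. Qed.

Lemma lmin_pos_le p (N : 'M[R]_p) a : a \in nonzero_eigs N -> lmin_pos N <= a.
Proof.
rewrite /lmin_pos; case: nonzero_eigs => // x s a_in.
by have := lexx (foldr Num.min x s); rewrite le_foldr_min => /allP; apply.
Qed.

Lemma lmin_pos_ge p (N : 'M[R]_p) c : nonzero_eigs N != [::] ->
  (forall a, a \in nonzero_eigs N -> c <= a) -> c <= lmin_pos N.
Proof. by rewrite /lmin_pos; case: nonzero_eigs => // x s _ /allP; rewrite le_foldr_min. Qed.

Lemma lmin_pos_nil p (N : 'M[R]_p) : nonzero_eigs N = [::] -> lmin_pos N = 0.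
Proof. by rewrite /lmin_pos => ->. Qed.

Lemma lmin_pos_ge0 p (N : 'M[R]_p) : (forall x, 0 <= qform N x) -> 0 <= lmin_pos N.
Proof.
move=> N_psd; have [/lmin_pos_nil -> // | N_eigs] := eqVneq (nonzero_eigs N) [::].
apply: lmin_pos_ge => // a; rewrite mem_nonzero_eigs => /andP[_].
exact: psd_eig_ge0.
Qed.

End LminPos.

Section Incidence.
Variable R : rcfType.

Lemma mulmx_edge_col p q (w : 'rV[R]_p) (a : R) (k l : 'I_p) (c d : 'I_q) :
  (w *m (a *: (delta_mx k c - delta_mx l c))) 0 d = (c == d)%:R * (a * (w 0 k - w 0 l)).
Proof.
have row_delta (s : 'I_p) : w *m delta_mx s c = w 0 s *: delta_mx 0 c.
  apply/rowP => t; rewrite !mxE (bigD1 s) //= big1 ?addr0 => [|r /negPf rs].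
    by rewrite !mxE !eqxx.
  by rewrite !mxE rs mulr0.
by rewrite -scalemxAr mulmxBr !row_delta !mxE !eqxx eq_sym; ring.
Qed.

Lemma sum_mxvec n m (F : 'I_(n * m) -> R) :
  \sum_k F k = \sum_i \sum_j F (mxvec_index i j).
Proof.
rewrite (reindex _ (curry_mxvec_bij _ _)) /= pair_bigA.
by apply: eq_bigr => -[i j].
Qed.

Lemma eq_mxvec_index n m (i i' : 'I_n) (j j' : 'I_m) :
  (mxvec_index i j == mxvec_index i' j') = (i == i') && (j == j').
Proof.
apply/eqP/andP => [/cast_ord_inj/enum_rank_inj[-> ->] | [/eqP-> /eqP->]] //.
Qed.

Variables (n E : nat) (src dst : 'I_E -> 'I_n) (mu : 'I_E -> R).
Local Notation L := (Lap src dst mu).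

Lemma Acomm_entry (x : 'rV[R]_n) e :
  (x *m Acomm src dst mu) 0 e = mu e * (x 0 (src e) - x 0 (dst e)).
Proof.
rewrite mulmx_sumr summxE (bigD1 e) //= big1 ?addr0 => [|f /negPf fe].
  by rewrite mulmx_edge_col eqxx mul1r.
by rewrite mulmx_edge_col fe mul0r.
Qed.

Lemma qform_Lap x :
  qform L x = \sum_e (mu e * (x 0 (src e) - x 0 (dst e))) ^+ 2.
Proof. by rewrite qform_mul_tr; apply: eq_bigr => e _; rewrite Acomm_entry. Qed.

Lemma Lap_sym : L^T = L.
Proof. by rewrite /Lap trmx_mul trmxK. Qed.

Lemma Lap_const : L *m (const_mx 1 : 'cV[R]_n) = 0.
Proof.
have A1 : (const_mx 1 : 'rV[R]_n) *m Acomm src dst mu = 0.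
  by apply/rowP => e; rewrite Acomm_entry !mxE subrr mulr0.
by rewrite /Lap -mulmxA -[const_mx 1]trmx_const -trmx_mul A1 trmx0 mulmx0.
Qed.

Lemma lmin_pos_Lap_ge0 : 0 <= lmin_pos L.
Proof.
by apply: lmin_pos_ge0 => x; rewrite qform_Lap sumr_ge0 // => e _; rewrite sqr_ge0.
Qed.

Hypothesis mu_gt0 : forall e, 0 < mu e.
Hypothesis conn : connected_graph src dst.

Lemma Lap_ker_const (v : 'rV[R]_n) : v *m L = 0 -> forall k l, v 0 k = v 0 l.
Proof.
move=> vL.
have : qform L v = 0 by rewrite /qform vL mul0mx mxE.
rewrite qform_Lap => /psumr_eq0P edge0.
have v_edge e : v 0 (src e) = v 0 (dst e).
  apply/eqP; rewrite -subr_eq0; move/eqP: (edge0 (fun e _ => sqr_ge0 _) e isT).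
  by rewrite sqrf_eq0 mulf_eq0 gt_eqF.
move=> k l; have /connectP[q q_path ->] := conn k l.
elim: q k q_path => [|a q IH] k //= /andP[/existsP[e ka] /IH <-].
by case/orP: ka => /andP[/eqP<- /eqP<-]; rewrite v_edge.
Qed.

End Incidence.

Section Poincare.
Variables (R : rcfType) (p : nat) (N : 'M[R]_p).
Hypothesis p_gt0 : (0 < p)%N.
Hypothesis N_sym : N^T = N.
Hypothesis N_const : N *m (const_mx 1 : 'cV[R]_p) = 0.
Hypothesis N_ker_const : forall v : 'rV_p, v *m N = 0 -> forall k l, v 0 k = v 0 l.

Local Notation l := (lmin_pos N).
Local Notation J := (const_mx 1 : 'M[R]_p).

(* On the orthogonal complement of the constants, [N - l] is positive semidefinite; the
   rank-one term [(l / p) J] restores positivity on the constants. *)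
Let N' := N - l%:M + (l / p%:R) *: J.

Let p_neq0 : p%:R != 0 :> R.
Proof. by rewrite pnatr_eq0 -lt0n. Qed.

Let rowJ (v : 'rV[R]_p) : v *m J = (\sum_k v 0 k) *: const_mx 1.
Proof. by apply/rowP => j; rewrite !mxE mulr1; apply: eq_bigr => k _; rewrite !mxE mulr1. Qed.

Let N'_sym : N'^T = N'.
Proof. by rewrite /N' !raddfD raddfN /= linearZ /= trmx_const tr_scalar_mx N_sym. Qed.

Let N'_const : N' *m (const_mx 1 : 'cV[R]_p) = 0.
Proof.
have J1 : J *m (const_mx 1 : 'cV[R]_p) = p%:R *: const_mx 1.
  apply/colP => i; rewrite !mxE (eq_bigr (fun _ => 1)) => [|j _]; last by rewrite !mxE mulr1.
  by rewrite sumr_const card_ord mulr1.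
rewrite !mulmxDl mulNmx N_const mul_scalar_mx -scalemxAl J1 scalerA divfK //.
by rewrite sub0r addNr.
Qed.

Let N'_eig_ge0 a : root (char_poly N') a -> 0 <= a.
Proof.
move=> /eigvalue_root[v vN' v_neq0]; have [-> // | a_neq0] := eqVneq a 0.
have v_sum0 : \sum_k v 0 k = 0.
  have := congr1 (fun M => (M *m (const_mx 1 : 'cV[R]_p)) 0 0) vN'.
  rewrite /= -mulmxA N'_const mulmx0 -scalemxAl !mxE => /esym/eqP.
  rewrite mulf_eq0 (negPf a_neq0) => /eqP; apply: etrans.
  by apply: eq_bigr => k _; rewrite !mxE mulr1.
have vN : v *m N = (a + l) *: v.
  move: vN'; rewrite /N' !mulmxDr mulmxN mul_mx_scalar -scalemxAr rowJ v_sum0.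
  by rewrite !scale0r scaler0 addr0 scalerDl => /eqP; rewrite subr_eq => /eqP.
have [al0 | al_neq0] := eqVneq (a + l) 0.
  case/eqP: v_neq0; apply/rowP => k.
  have vN0 : v *m N = 0 by rewrite vN al0 scale0r.
  have v_const := N_ker_const vN0.
  have : p%:R * v 0 k = 0.
    rewrite -v_sum0 (eq_bigr (fun _ => v 0 k)) => [|k' _]; last exact: v_const.
    by rewrite sumr_const card_ord mulr_natl.
  by rewrite mxE => /eqP; rewrite mulf_eq0 (negPf p_neq0) => /eqP.
have : l <= a + l.
  apply: lmin_pos_le; rewrite mem_nonzero_eigs al_neq0 -eigenvalue_root_char.
  by apply/eigenvalueP; exists v.
by rewrite lerDr.
Qed.

Lemma sum_sqr_dev_mean (x : 'rV[R]_p) :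
  \sum_i (x 0 i - (\sum_j x 0 j) / p%:R) ^+ 2 =
  \sum_i x 0 i ^+ 2 - (\sum_j x 0 j) ^+ 2 / p%:R.
Proof.
set s := \sum_j x 0 j; set t := s / p%:R.
rewrite (eq_bigr (fun i => x 0 i ^+ 2 - 2 * t * x 0 i + t ^+ 2)) => [|i _]; last by ring.
rewrite big_split sumrB /= -mulr_sumr sumr_const card_ord -/s -mulr_natl /t.
by field.
Qed.

Lemma qform_ge_lmin_pos_dev (x : 'rV[R]_p) :
  l * \sum_i (x 0 i - (\sum_j x 0 j) / p%:R) ^+ 2 <= qform N x.
Proof.
have := symmx_qform_ge0 x N'_sym N'_eig_ge0.
rewrite /N' !qformD qformN qformZ qform_scalar qform_const1 sum_sqr_dev_mean.
set S2 := \sum_k _ ^+ 2; set T := \sum_k x 0 k; move=> h.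
rewrite -subr_ge0 (_ : _ - _ = qform N x - l * S2 + l / p%:R * T ^+ 2) //; ring.
Qed.

End Poincare.

Section Inequalities.
Variable R : rcfType.

Lemma sum_wsqr_le_shift p (g w : 'I_p -> R) t :
  (forall k, 0 <= g k) -> \sum_k g k * w k = 0 ->
  \sum_k g k * w k ^+ 2 <= \sum_k g k * (w k - t) ^+ 2.
Proof.
move=> g_ge0 gw0.
have -> : \sum_k g k * (w k - t) ^+ 2 =
    \sum_k g k * w k ^+ 2 - 2 * t * \sum_k g k * w k + t ^+ 2 * \sum_k g k.
  by rewrite !mulr_sumr -sumrB -big_split; apply: eq_bigr => k _ /=; ring.
by rewrite gw0 mulr0 subr0 lerDl mulr_ge0 ?sqr_ge0 ?sumr_ge0.
Qed.

Lemma star_energy_ge m (ell sigma kap s x t : R) (y L : 'I_m -> R) :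
  let K := 1 + s^-1 * \sum_j L j in
  0 <= ell -> 0 < s -> s <= sigma -> K <= kap -> (forall j, 0 < L j) ->
  ell / (2 * sigma * kap) * (s * (x - t) ^+ 2 + \sum_j L j * (y j - t) ^+ 2)
  <= ell * (x - t) ^+ 2 + \sum_j ell / (sigma * K) * L j * (x - y j) ^+ 2.
Proof.
move=> K ell_ge0 s_gt0 s_le K_le L_gt0.
set c := ell / (2 * sigma * kap); set a := (x - t) ^+ 2.
set SL := \sum_j L j; set D := \sum_j L j * (x - y j) ^+ 2.
have sigma_gt0 : 0 < sigma := lt_le_trans s_gt0 s_le.
have SL_ge0 : 0 <= SL by rewrite sumr_ge0 // => j _; apply/ltW.
have K_ge1 : 1 <= K by rewrite lerDl mulr_ge0 // invr_ge0 ltW.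
have kap_gt0 : 0 < kap := lt_le_trans ltr01 (le_trans K_ge1 K_le).
have sK : s * K = s + SL by rewrite mulrDr mulr1 mulrA mulfV ?mul1r // gt_eqF.
have c_ge0 : 0 <= c by rewrite divr_ge0 // !mulr_ge0 // ltW.
have D_ge0 : 0 <= D by rewrite sumr_ge0 // => j _; rewrite mulr_ge0 ?sqr_ge0 // ltW.
have virt_le : \sum_j L j * (y j - t) ^+ 2 <= 2 * a * SL + 2 * D.
  rewrite /SL /D !mulr_sumr -big_split ler_sum // => j _ /=.
  have : (y j - t) ^+ 2 <= 2 * a + 2 * (x - y j) ^+ 2.
    by have := sqr_ge0 (x - t + (x - y j)); rewrite /a; nra.
  by have := L_gt0 j; nra.
have c_mul : c * (2 * sigma * kap) = ell by rewrite mulfVK // !mulf_neq0 // gt_eqF.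
have weight_le : c * (s + 2 * SL) <= ell.
  have sK_le := ler_pM (ltW s_gt0) (le_trans ler01 K_ge1) s_le K_le.
  by rewrite -c_mul ler_wpM2l //; nra.
have c_le : 2 * c <= ell / (sigma * K).
  have -> : 2 * c = ell / (sigma * kap) by rewrite /c; field; rewrite !gt_eqF.
  have K_gt0 : 0 < K := lt_le_trans ltr01 K_ge1.
  by rewrite ler_wpM2l // lef_pV2 ?posrE ?mulr_gt0 // ler_wpM2l // ltW.
have -> : \sum_j ell / (sigma * K) * L j * (x - y j) ^+ 2 = ell / (sigma * K) * D.
  by rewrite mulr_sumr; apply: eq_bigr => j _; rewrite mulrA.
have e1 := ler_wpM2l c_ge0 virt_le.
have e2 := ler_wpM2r (sqr_ge0 (x - t)) weight_le.
have e3 := ler_wpM2r D_ge0 c_le.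
rewrite -/a in e2; nra.
Qed.

End Inequalities.

Section Augmented.
Variable R : rcfType.
Variables (n m E : nat) (src dst : 'I_E -> 'I_n) (mu : 'I_E -> R).
Variables (muv : 'I_n -> 'I_m -> R) (orient : 'I_n -> 'I_m -> bool).
Variables (sig : 'I_n -> R) (Lij : 'I_n -> 'I_m -> R).

Local Notation A := (Aaug src dst mu muv orient).
Local Notation S := (Sig_isqrt sig Lij).
Local Notation M := (Ltilde src dst mu muv orient sig Lij).
Local Notation g k := (sigdiag sig Lij 0 k).

Lemma Aaug_entry (w : 'rV[R]_(n + n * m)) k :
  (w *m A) 0 k =
  \sum_e (cedge n m e == k)%:R * (mu e * (w 0 (ctr m (src e)) - w 0 (ctr m (dst e))))
  + \sum_i \sum_j (vedge E i j == k)%:R *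
      (muv i j * (if orient i j then 1 else -1) * (w 0 (ctr m i) - w 0 (vrt i j))).
Proof.
rewrite mulmxDr !mulmx_sumr mxE !summxE; congr (_ + _).
  by apply: eq_bigr => e _; rewrite mulmx_edge_col.
apply: eq_bigr => i _; rewrite mulmx_sumr summxE.
by apply: eq_bigr => j _; rewrite mulmx_edge_col.
Qed.

Lemma Aaug_cedge (w : 'rV[R]_(n + n * m)) e :
  (w *m A) 0 (cedge n m e) = mu e * (w 0 (ctr m (src e)) - w 0 (ctr m (dst e))).
Proof.
rewrite Aaug_entry (bigD1 e) //= eqxx mul1r big1 ?addr0 => [|f /negPf fe].
  rewrite big1 ?addr0 // => i _; rewrite big1 // => j _.
  by rewrite eq_rlshift mul0r.
by rewrite eq_lshift fe mul0r.
Qed.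

Lemma Aaug_vedge (w : 'rV[R]_(n + n * m)) i j :
  (w *m A) 0 (vedge E i j) =
  muv i j * (if orient i j then 1 else -1) * (w 0 (ctr m i) - w 0 (vrt i j)).
Proof.
rewrite Aaug_entry big1 ?add0r => [|e _]; last by rewrite eq_lrshift mul0r.
rewrite (bigD1 i) //= (bigD1 j) //= eqxx mul1r big1 ?addr0 => [|j' /negPf j'j].
  rewrite big1 ?addr0 // => i' /negPf i'i; rewrite big1 // => j' _.
  by rewrite eq_rshift eq_mxvec_index i'i mul0r.
by rewrite eq_rshift eq_mxvec_index j'j andbF mul0r.
Qed.

Lemma sum_sqr_Aaug (w : 'rV[R]_(n + n * m)) :
  \sum_k (w *m A) 0 k ^+ 2 =
  \sum_e (mu e * (w 0 (ctr m (src e)) - w 0 (ctr m (dst e)))) ^+ 2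
  + \sum_i \sum_j muv i j ^+ 2 * (w 0 (ctr m i) - w 0 (vrt i j)) ^+ 2.
Proof.
rewrite big_split_ord /=; congr (_ + _).
  by apply: eq_bigr => e _; rewrite Aaug_cedge.
rewrite sum_mxvec; apply: eq_bigr => i _; apply: eq_bigr => j _.
rewrite (Aaug_vedge w i j) !exprMn.
by case: (orient i j); rewrite ?sqrrN expr1n mulr1.
Qed.

Lemma const_mul_Aaug : (const_mx 1 : 'rV[R]_(n + n * m)) *m A = 0.
Proof.
apply/rowP => k; rewrite Aaug_entry !mxE !big1 ?addr0 // => [i _|e _].
  by rewrite big1 // => j _; rewrite !mxE subrr !mulr0.
by rewrite !mxE subrr !mulr0.
Qed.

Hypothesis sig_gt0 : forall i, 0 < sig i.
Hypothesis Lij_gt0 : forall i j, 0 < Lij i j.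

Lemma sigdiag_ctr i : g (ctr m i) = sig i.
Proof. by rewrite row_mxEl mxE. Qed.

Lemma sigdiag_vrt i j : g (vrt i j) = Lij i j.
Proof. by rewrite row_mxEr mxvecE mxE. Qed.

Lemma sum_aug_nodes (F : 'I_(n + n * m) -> R) :
  \sum_k F k = \sum_i (F (ctr m i) + \sum_j F (vrt i j)).
Proof. by rewrite big_split_ord sum_mxvec big_split. Qed.

Lemma sigdiag_gt0 k : 0 < g k.
Proof.
rewrite -(splitK k); case: (fintype.split k) => [i|t] /=.
  by rewrite (sigdiag_ctr i).
by case/mxvec_indexP: t => i j; rewrite (sigdiag_vrt i j).
Qed.

Lemma Sig_isqrt_entry (v : 'rV[R]_(n + n * m)) k :
  (v *m S) 0 k = v 0 k / Num.sqrt (g k).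
Proof. by rewrite mul_mx_diag !mxE. Qed.

Lemma Ltilde_sym : M^T = M.
Proof. by rewrite /Ltilde !trmx_mul tr_diag_mx trmxK !mulmxA. Qed.

Lemma qform_Ltilde v : qform M v = \sum_k (v *m S *m A) 0 k ^+ 2.
Proof.
have -> : M = S *m A *m (S *m A)^T by rewrite /Ltilde trmx_mul tr_diag_mx !mulmxA.
by rewrite qform_mul_tr mulmxA.
Qed.

Lemma Ltilde_sqrt_sigdiag : M *m (\col_k Num.sqrt (g k)) = 0.
Proof.
have S_sqrt : S *m (\col_k Num.sqrt (g k)) = const_mx 1.
  apply/colP => k; rewrite mul_diag_mx mxE [map_mx _ _ _ _]mxE [X in _ * X]mxE.
  by rewrite [RHS]mxE mulVf // gt_eqF // sqrtr_gt0 sigdiag_gt0.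
have A1 : A^T *m (const_mx 1 : 'cV[R]_(n + n * m)) = 0.
  by rewrite -trmx_const -trmx_mul const_mul_Aaug trmx0.
by rewrite /Ltilde -!mulmxA S_sqrt A1 !mulmx0.
Qed.

Lemma qform_Ltilde_lift (x : 'rV[R]_n) :
  exists v, qform M v = qform (Lap src dst mu) x.
Proof.
pose w := row_mx x (mxvec (\matrix_(i, j) x 0 i)) : 'rV[R]_(n + n * m).
have w_ctr i : w 0 (ctr m i) = x 0 i by rewrite row_mxEl.
have w_vrt i j : w 0 (vrt i j) = x 0 i by rewrite row_mxEr mxvecE mxE.
exists (\row_k (w 0 k * Num.sqrt (g k))); rewrite qform_Ltilde.
have -> : (\row_k (w 0 k * Num.sqrt (g k))) *m S = w.
  apply/rowP => k; rewrite Sig_isqrt_entry mxE mulfK //.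
  by rewrite gt_eqF // sqrtr_gt0 sigdiag_gt0.
rewrite sum_sqr_Aaug qform_Lap.
rewrite [X in _ + X]big1 ?addr0 => [|i _]; last first.
  by rewrite big1 // => j _; rewrite w_ctr w_vrt subrr expr0n mulr0.
by apply: eq_bigr => e _; rewrite !w_ctr.
Qed.

Lemma Ltilde_nonzero_eigs_nil :
  nonzero_eigs M = [::] -> nonzero_eigs (Lap src dst mu) = [::].
Proof.
move=> M_nil; case L_eigs: nonzero_eigs => [//|a s].
have [|x /eqP[]] := @nonzero_eigs_qform_neq0 _ _ (Lap src dst mu) a.
  by rewrite L_eigs mem_head.
have [v <-] := qform_Ltilde_lift x.
exact: symmx_qform_eq0 Ltilde_sym M_nil.
Qed.

End Augmented.

Section Bound.
Variable R : rcfType.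
Variables (n m E : nat) (src dst : 'I_E -> 'I_n) (mu : 'I_E -> R).
Variables (muv : 'I_n -> 'I_m -> R) (orient : 'I_n -> 'I_m -> bool).
Variables (sig : 'I_n -> R) (Lij : 'I_n -> 'I_m -> R) (sigma kap : R).
Hypothesis conn : connected_graph src dst.
Hypothesis mu_gt0 : forall e, 0 < mu e.
Hypothesis sig_gt0 : forall i, 0 < sig i.
Hypothesis Lij_gt0 : forall i j, 0 < Lij i j.
Hypothesis sig_le : forall i, sig i <= sigma.
Hypothesis kappa_le : forall i, kappa sig Lij i <= kap.
Hypothesis muvE : forall i j,
  muv i j ^+ 2 = lmin_pos (Lap src dst mu) / (sigma * kappa sig Lij i) * Lij i j.

Local Notation L := (Lap src dst mu).
Local Notation A := (Aaug src dst mu muv orient).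
Local Notation S := (Sig_isqrt sig Lij).
Local Notation M := (Ltilde src dst mu muv orient sig Lij).
Local Notation g k := (sigdiag sig Lij 0 k).
Local Notation c := (lmin_pos L / (2 * sigma * kap)).

Lemma lmin_pos_Lap_div_ge0 : (0 < n)%N -> 0 <= c.
Proof.
move=> n_gt0; pose i0 := Ordinal n_gt0.
have sigma_gt0 : 0 < sigma := lt_le_trans (sig_gt0 i0) (sig_le i0).
have kappa_ge1 : 1 <= kappa sig Lij i0.
  by rewrite lerDl mulr_ge0 ?invr_ge0 ?sumr_ge0 // => [|j _]; apply/ltW.
have kap_gt0 : 0 < kap := lt_le_trans ltr01 (le_trans kappa_ge1 (kappa_le i0)).
by rewrite divr_ge0 ?lmin_pos_Lap_ge0 // !mulr_ge0 // ltW.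
Qed.

Lemma Aaug_energy_ge (w : 'rV[R]_(n + n * m)) : (0 < n)%N ->
  c * \sum_k g k * (w 0 k - (\sum_i w 0 (ctr m i)) / n%:R) ^+ 2
  <= \sum_k (w *m A) 0 k ^+ 2.
Proof.
move=> n_gt0; set t := _ / n%:R; pose x := \row_i w 0 (ctr m i).
have x_mean : (\sum_j x 0 j) / n%:R = t by congr (_ / _); apply: eq_bigr => i _; rewrite mxE.
have poincare := qform_ge_lmin_pos_dev n_gt0 (Lap_sym src dst mu) (Lap_const src dst mu)
  (Lap_ker_const mu_gt0 conn) x.
rewrite x_mean in poincare.
have -> : \sum_k (w *m A) 0 k ^+ 2 = qform L x +
    \sum_i \sum_j muv i j ^+ 2 * (w 0 (ctr m i) - w 0 (vrt i j)) ^+ 2.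
  by rewrite sum_sqr_Aaug qform_Lap; congr (_ + _); apply: eq_bigr => e _; rewrite !mxE.
apply: le_trans (lerD poincare (lexx _)); rewrite [X in _ <= X + _]mulr_sumr -big_split /=.
rewrite sum_aug_nodes mulr_sumr; apply: ler_sum => i _.
rewrite sigdiag_ctr mxE (eq_bigr (fun j => Lij i j * (w 0 (vrt i j) - t) ^+ 2)) => [|j _];
  last by rewrite sigdiag_vrt.
under [X in _ <= _ + X]eq_bigr do rewrite muvE.
exact: star_energy_ge (lmin_pos_Lap_ge0 _ _ _) (sig_gt0 i) (sig_le i) (kappa_le i) (Lij_gt0 i).
Qed.

Lemma Ltilde_eig_ge lam : lam \in nonzero_eigs M -> c <= lam.
Proof.
rewrite mem_nonzero_eigs => /andP[lam_neq0 /eigvalue_root[v vM v_neq0]].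
have n_gt0 : (0 < n)%N.
  rewrite lt0n; apply: contra_neq v_neq0 => n0; apply/rowP => k.
  have dim0 : (n + n * m = 0)%N by rewrite n0.
  by have := ltn_ord k; rewrite [X in (_ < X)%N]dim0.
have g_gt0 k : 0 < g k := sigdiag_gt0 sig_gt0 Lij_gt0 k.
have sqrt_neq0 k : Num.sqrt (g k) != 0 by rewrite gt_eqF ?sqrtr_gt0.
have sqr_sqrt k : Num.sqrt (g k) ^+ 2 = g k by rewrite sqr_sqrtr ?ltW.
set w := v *m S.
have wE k : w 0 k = v 0 k / Num.sqrt (g k) by rewrite Sig_isqrt_entry.
have v_sqr : \sum_k v 0 k ^+ 2 = \sum_k g k * w 0 k ^+ 2.
  by apply: eq_bigr => k _; rewrite wE expr_div_n sqr_sqrt mulrC divfK ?gt_eqF.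
(* [v] is orthogonal to the kernel vector [Sigma^(1/2) 1] of [M]. *)
have gw0 : \sum_k g k * w 0 k = 0.
  have := congr1 (fun X : 'M_1 => X 0 0)
    (congr1 (mulmx^~ (\col_k Num.sqrt (g k))) vM).
  rewrite /= -mulmxA Ltilde_sqrt_sigdiag // mulmx0 -scalemxAl !mxE => /esym/eqP.
  rewrite mulf_eq0 (negPf lam_neq0) => /eqP; apply: etrans.
  by apply: eq_bigr => k _; rewrite wE [X in _ = _ * X]mxE -{1}sqr_sqrt; field.
have v_gt0 : 0 < \sum_k v 0 k ^+ 2 by rewrite sum_sqr_row_gt0.
rewrite -(ler_pM2r v_gt0) -(qform_eigvec vM) qform_Ltilde -/w.
apply: le_trans (Aaug_energy_ge w n_gt0); rewrite v_sqr.
by rewrite ler_wpM2l ?lmin_pos_Lap_div_ge0 // sum_wsqr_le_shift // => k; apply: ltW.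
Qed.

End Bound.

Theorem lemma5 (R : rcfType) (n m E : nat)
    (src dst : 'I_E -> 'I_n) (mu : 'I_E -> R)
    (muv : 'I_n -> 'I_m -> R) (orient : 'I_n -> 'I_m -> bool)
    (sig : 'I_n -> R) (Lij : 'I_n -> 'I_m -> R) (sigma kap : R) :
  simple_graph src dst ->
  connected_graph src dst ->
  (forall e, 0 < mu e) ->
  (forall i, 0 < sig i) ->
  (forall i j, 0 < Lij i j) ->
  (forall i j, 0 < muv i j) ->
  (forall i, sig i <= sigma) ->
  (forall i, kappa sig Lij i <= kap) ->
  (forall i j, muv i j ^+ 2 =
     lmin_pos (Lap src dst mu) / (sigma * kappa sig Lij i) * Lij i j) ->
  lmin_pos (Ltilde src dst mu muv orient sig Lij)
    >= lmin_pos (Lap src dst mu) / (2 * sigma * kap).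
Proof.
move=> _ conn mu_gt0 sig_gt0 Lij_gt0 _ sig_le kappa_le muvE.
have [M_nil | M_eigs] := eqVneq (nonzero_eigs (Ltilde src dst mu muv orient sig Lij)) [::].
  have L_nil := Ltilde_nonzero_eigs_nil sig_gt0 Lij_gt0 M_nil.
  by rewrite (lmin_pos_nil M_nil) (lmin_pos_nil L_nil) mul0r.
apply: lmin_pos_ge => // lam.
exact: Ltilde_eig_ge conn mu_gt0 sig_gt0 Lij_gt0 sig_le kappa_le muvE lam.
Qed.
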